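(* Let $I$ be a nonempty set and $H$ a real Hilbert space; for each $i\in I$ let $C_i$ be a nonempty compact convex subset of $H$. Equip $H^I$ with the product topology generated by the norm topology on each factor $H$. For each $i\in I$ let $T_i:C_i\to C_i$ be nonexpansive with $\mathrm{Fix}(T_i)\neq\emptyset$, and let $f_i:C_i\to C_i$ be an $\alpha_i$-contraction, i.e. $\|f_i(x)-f_i(y)\|\le\alpha_i\|x-y\|$ with $0\le\alpha_i<1$. Let $\{\epsilon_n\}\subseteq(0,1)$ with $\lim_n\epsilon_n=0$. Then for each $i\in I$ there exist a unique sunny nonexpansive retraction $P_i$ of $C_i$ onto $\mathrm{Fix}(T_i)$ and a point $x_i\in C_i$ such that the sequence $\{g_n\}$ in $H^I$ defined by $g_n(i)=z_{n,i}$ $(i\in I)$, where $z_{n,i}\in C_i$ satisfies $$z_{n,i}=\epsilon_nf_i(z_{n,i})+(1-\epsilon_n)\frac1n\sum_{k=1}^nT_i^kz_{n,i},$$ converges in the product topology of $H^I$ to the function $g:I\to H$ defined by $g(i)=P_ix_i$.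
   Context: A retraction $P$ of $C$ onto $D\subseteq C$ (i.e. $Px=x$ for $x\in D$) is sunny if $P(Px+t(x-Px))=Px$ whenever $x\in C$, $t\ge0$ and $Px+t(x-Px)\in C$. $\mathrm{Fix}(T)$ is the set of fixed points of $T$. *)

From HB Require Import structures.
From mathcomp Require Import all_boot all_order all_algebra.
From mathcomp Require Import all_classical all_reals all_analysis.
Set Implicit Arguments. Unset Strict Implicit. Unset Printing Implicit Defensive.
Import Order.TTheory GRing.Theory Num.Theory.
Import numFieldNormedType.Exports.
Local Open Scope classical_set_scope.
Local Open Scope ring_scope.

Section Defs.
Context {R : realType} {H : normedModType R}.

(* ip is a real inner product inducing the norm of H:
   symmetric, linear in the first argument, and <x,x> = ||x||^2.
   Together with completeness of H this makes H a real Hilbert space. *)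
Definition is_inner_product (ip : H -> H -> R) : Prop :=
  (forall x y, ip x y = ip y x) /\
  (forall (a : R) x y z, ip (a *: x + y) z = a * ip x z + ip y z) /\
  (forall x, ip x x = `|x| ^+ 2).

Definition convex_set_in (C : set H) : Prop :=
  forall x y (t : R), C x -> C y -> 0 <= t -> t <= 1 -> C (t *: x + (1 - t) *: y).

Definition maps_into (C : set H) (T : H -> H) : Prop :=
  forall x, C x -> C (T x).

Definition nonexpansive_on (C : set H) (T : H -> H) : Prop :=
  forall x y, C x -> C y -> `|T x - T y| <= `|x - y|.

Definition contraction_on (C : set H) (f : H -> H) (alpha : R) : Prop :=
  0 <= alpha /\ alpha < 1 /\
  forall x y, C x -> C y -> `|f x - f y| <= alpha * `|x - y|.

Definition Fix (C : set H) (T : H -> H) : set H := [set x | C x /\ T x = x].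

Definition retraction_onto (C D : set H) (P : H -> H) : Prop :=
  (forall x, C x -> D (P x)) /\ (forall x, D x -> P x = x).

Definition sunny_on (C : set H) (P : H -> H) : Prop :=
  forall x (t : R), C x -> 0 <= t -> C (P x + t *: (x - P x)) ->
    P (P x + t *: (x - P x)) = P x.

Definition sunny_nonexpansive_retraction (C D : set H) (P : H -> H) : Prop :=
  retraction_onto C D P /\ sunny_on C P /\ nonexpansive_on C P.

Definition cesaro_avg (n : nat) (T : H -> H) (z : H) : H :=
  (n%:R)^-1 *: \sum_(1 <= k < n.+1) iter k T z.

End Defs.

From HB Require Import structures.
From mathcomp Require Import all_boot all_order all_algebra.
From mathcomp Require Import all_classical all_reals all_analysis.
From mathcomp Require Import lra ring.
Import Order.TTheory GRing.Theory Num.Theory.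
Import numFieldNormedType.Exports.
Local Open Scope classical_set_scope.
Local Open Scope ring_scope.

(* For each i, Fix(T_i) is a nonempty compact convex set, so the metric
   projection P_i onto it exists.  It is characterised by the variational
   inequality <x - P_i x, p - P_i x> <= 0 for p in Fix(T_i); this makes it a
   sunny nonexpansive retraction, and conversely every sunny nonexpansive
   retraction of C_i onto Fix(T_i) satisfies the same inequality, hence equals
   P_i.  P_i o f_i is a contraction of the compact set Fix(T_i); with q_i its
   fixed point take x_i = f_i q_i, so that P_i x_i = q_i.
   For the implicit iterates z_n, the Cesaro mean S_n of the orbit of z_n
   satisfies n |T S_n - S_n|^2 <= diam(C_i)^2, so |z_n - T z_n| -> 0 and every
   cluster point of (z_n) is a fixed point.  Testing the equation of z_n
   against q_i gives (1 - alpha_i) |z_n - q_i|^2 <= <f_i q_i - q_i, z_n - q_i>,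
   whose limsup is <= 0 by the variational inequality at the cluster points.
   Convergence in the product topology is coordinatewise. *)

Lemma le0_of_le_vanishing_mul {R : realFieldType} (s K : R) : 0 <= K ->
  (forall t, 0 < t -> t <= 1 -> s <= t * K) -> s <= 0.
Proof.
move=> K0 sK; rewrite leNgt; apply/negP => s0.
have sK0 : 0 < s + K by lra.
have := sK (s / (s + K)) (divr_gt0 s0 sK0).
rewrite ler_pdivrMr // mul1r => /(_ ltac:(lra)).
rewrite mulrAC ler_pdivlMr //; nra.
Qed.

Lemma convex_combE {R : pzRingType} {V : lmodType R} (t : R) (x y : V) :
  t *: x + (1 - t) *: y = y + t *: (x - y).
Proof. by rewrite scalerBl scale1r scalerBr addrCA. Qed.

Lemma scaler_natK {R : numFieldType} {V : lmodType R} (n : nat) (v : V) :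
  (0 < n)%N -> n%:R^-1 *: (v *+ n) = v.
Proof.
move=> n0; rewrite -scalerMnr scalerMnl -mulr_natr mulVf ?scale1r //.
by rewrite pnatr_eq0 -lt0n.
Qed.

Section InnerProduct.
Context {R : realType} {H : normedModType R} {ip : H -> H -> R}.
Hypothesis ipP : is_inner_product ip.

Lemma ipC x y : ip x y = ip y x. Proof. by case: ipP. Qed.
Lemma ip_norm2 x : ip x x = `|x| ^+ 2. Proof. by case: ipP => _ []. Qed.

Lemma ipZDl a x y z : ip (a *: x + y) z = a * ip x z + ip y z.
Proof. by case: ipP => _ []. Qed.

Lemma ip0l z : ip 0 z = 0.
Proof.
have := ipZDl 1 0 0 z; rewrite scaler0 addr0 mul1r -{1}[ip 0 z]addr0.
by move/addrI <-.
Qed.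

Lemma ipDl x y z : ip (x + y) z = ip x z + ip y z.
Proof. by rewrite -[x]scale1r ipZDl mul1r scale1r. Qed.

Lemma ipZl a x z : ip (a *: x) z = a * ip x z.
Proof. by rewrite -[a *: x]addr0 ipZDl ip0l addr0. Qed.

Lemma ipNl x z : ip (- x) z = - ip x z.
Proof. by rewrite -scaleN1r ipZl mulN1r. Qed.

Lemma ipBl x y z : ip (x - y) z = ip x z - ip y z.
Proof. by rewrite ipDl ipNl. Qed.

Lemma ip0r z : ip z 0 = 0. Proof. by rewrite ipC ip0l. Qed.

Lemma ipDr x y z : ip z (x + y) = ip z x + ip z y.
Proof. by rewrite ipC ipDl !(ipC z). Qed.

Lemma ipZr a x z : ip z (a *: x) = a * ip z x.
Proof. by rewrite ipC ipZl ipC. Qed.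

Lemma ipNr x z : ip z (- x) = - ip z x.
Proof. by rewrite ipC ipNl ipC. Qed.

Lemma ipBr x y z : ip z (x - y) = ip z x - ip z y.
Proof. by rewrite ipDr ipNr. Qed.

Definition ipE := (ipDl, ipDr, ipBl, ipBr, ipZl, ipZr, ipNl, ipNr).

Lemma ip_sumr (J : Type) (r : seq J) (P : pred J) (F : J -> H) x :
  ip x (\sum_(j <- r | P j) F j) = \sum_(j <- r | P j) ip x (F j).
Proof. by rewrite (big_morph (ip x) (fun a b => ipDr a b x) (ip0r x)). Qed.

Lemma normD2 x y : `|x + y| ^+ 2 = `|x| ^+ 2 + 2 * ip x y + `|y| ^+ 2.
Proof. rewrite -!ip_norm2 !ipE (ipC y x); ring. Qed.

Lemma cauchy_schwarz x y : ip x y <= `|x| * `|y|.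
Proof.
have [->|x0] := eqVneq x 0; first by rewrite ip0l normr0 mul0r.
have [->|y0] := eqVneq y 0; first by rewrite ip0r normr0 mulr0.
have xp : 0 < `|x| by rewrite normr_gt0.
have yp : 0 < `|y| by rewrite normr_gt0.
have : 0 <= Num.norm (`|y| *: x - `|x| *: y) ^+ 2 by rewrite exprn_ge0.
rewrite -ip_norm2 !ipE !ip_norm2 (ipC y x) => sq_ge0.
have : (`|x| * `|y|) * ip x y <= (`|x| * `|y|) * (`|x| * `|y|) by nra.
by rewrite ler_pM2l ?mulr_gt0.
Qed.

Lemma norm_ip_le x y : `|ip x y| <= `|x| * `|y|.
Proof.
rewrite ler_norml cauchy_schwarz andbT lerNl -ipNr.
by rewrite (le_trans (cauchy_schwarz _ _)) // normrN.
Qed.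

Lemma sqr_norm_convex_comb (t : R) (a b y : H) :
  `|y - (t *: a + (1 - t) *: b)| ^+ 2 =
    t * `|y - a| ^+ 2 + (1 - t) * `|y - b| ^+ 2 - t * (1 - t) * `|a - b| ^+ 2.
Proof. rewrite -!ip_norm2 !ipE (ipC a y) (ipC b y) (ipC b a); ring. Qed.

Lemma sum_sqr_dist_mean n (v : nat -> H) y : (0 < n)%N ->
  \sum_(1 <= k < n.+1) `|y - v k| ^+ 2 =
    n%:R * `|y - n%:R^-1 *: \sum_(1 <= k < n.+1) v k| ^+ 2
    + \sum_(1 <= k < n.+1) `|n%:R^-1 *: \sum_(1 <= j < n.+1) v j - v k| ^+ 2.
Proof.
move=> n0; set m := n%:R^-1 *: _.
have split_m k :
    `|y - v k| ^+ 2 = `|y - m| ^+ 2 + 2 * ip (y - m) (m - v k) + `|m - v k| ^+ 2.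
  by rewrite -normD2 addrA subrK.
rewrite (eq_bigr _ (fun k _ => split_m k)) !big_split /= sumr_const_nat subSS subn0.
rewrite -mulr_sumr -ip_sumr sumrB sumr_const_nat subSS subn0 /m.
rewrite [X in ip _ (X - _)]scalerMnr scaler_natK // subrr ip0r mulr0 addr0.
by rewrite mulr_natl.
Qed.

Lemma ip_le0_of_min_segment a b :
  (forall t, 0 < t -> t <= 1 -> `|a| <= `|a - t *: b|) -> ip a b <= 0.
Proof.
move=> amin; suff : 2 * ip a b <= 0 by lra.
apply: (@le0_of_le_vanishing_mul _ _ (`|b| ^+ 2)) => [|t t0 t1].
  exact: exprn_ge0.
have := amin t t0 t1; rewrite -(ler_pXn2r (_ : (0 < 2)%N)) ?nnegrE //.
rewrite -!ip_norm2 !ipE (ipC b a) ip_norm2 => h.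
by rewrite -(ler_pM2l t0); nra.
Qed.

End InnerProduct.

(* [p] is the nearest point of [D] to [x], in its variational form. *)
Definition is_metric_proj {R : realType} {H : normedModType R}
    (ip : H -> H -> R) (D : set H) (x p : H) : Prop :=
  D p /\ forall r, D r -> ip (x - p) (r - p) <= 0.

Lemma lipschitz_within_continuous {R : realType} {V : normedModType R}
    (A : set V) (g : V -> R) (L : R) : 0 <= L ->
  (forall x y, A x -> A y -> `|g x - g y| <= L * `|x - y|) ->
  {within A, continuous g}.
Proof.
move=> L0 Lg; apply/subspace_continuousP => x Ax.
apply/cvgrPdist_le => /= e e0.
have L1 : 0 < L + 1 by rewrite ltr_wpDl.
rewrite near_withinE; apply/nbhs_ballP; exists (e / (L + 1)); first exact: divr_gt0.
move=> y; rewrite -ball_normE /= => xy Ay.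
apply: le_trans (Lg _ _ Ax Ay) _.
have : L * `|x - y| <= (L + 1) * (e / (L + 1)) by apply: ler_pM => //; lra.
by move/le_trans; apply; rewrite mulrC divfK // gt_eqF.
Qed.

Section MetricProjection.
Context {R : realType} {H : normedModType R} {ip : H -> H -> R}.
Hypothesis ipP : is_inner_product ip.
Implicit Types (C D : set H) (P Q : H -> H).

Lemma metric_proj_exists D : D !=set0 -> compact D -> convex_set_in D ->
  exists P, forall x, is_metric_proj ip D x (P x).
Proof.
move=> D0 cD cvD; suff /choice[P PD] x : exists p, is_metric_proj ip D x p.
  by exists P.
have dist_cont : {within D, continuous (fun y => `|x - y|)}.
  apply: (@lipschitz_within_continuous _ _ _ _ 1) => // y1 y2 _ _.
  rewrite mul1r (le_trans (ler_dist_dist _ _)) //.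
  by rewrite opprB addrC addrA subrK distrC.
have [p /set_mem Dp pmin] := compact_EVT_min D0 cD dist_cont.
exists p; split => // r Dr; apply: (ip_le0_of_min_segment ipP) => t t0 t1.
have Dt : D (t *: r + (1 - t) *: p) by apply: cvD => //; exact: ltW.
by have := pmin _ (mem_set Dt); rewrite convex_combE opprD addrA.
Qed.

Lemma metric_proj_id {D x} : D x -> is_metric_proj ip D x x.
Proof. by move=> Dx; split => // r _; rewrite subrr (ip0l ipP). Qed.

Lemma metric_proj_sunny {D x p} {t : R} : 0 <= t ->
  is_metric_proj ip D x p -> is_metric_proj ip D (p + t *: (x - p)) p.
Proof.
move=> t0 [Dp px]; split => // r Dr.
by rewrite addrAC subrr add0r (ipZl ipP) mulr_ge0_le0 // px.
Qed.

Lemma metric_proj_nonexpansive {D x y p q} :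
  is_metric_proj ip D x p -> is_metric_proj ip D y q -> `|p - q| <= `|x - y|.
Proof.
move=> [Dp px] [Dq qy].
have key : `|p - q| ^+ 2 <= ip (x - y) (p - q).
  have := px _ Dq; have := qy _ Dp.
  by rewrite -(ip_norm2 ipP) !(ipE ipP); lra.
have := cauchy_schwarz ipP (x - y) (p - q).
have := normr_ge0 (p - q); have := normr_ge0 (x - y); nra.
Qed.

Lemma metric_proj_unique {D x p1 p2} :
  is_metric_proj ip D x p1 -> is_metric_proj ip D x p2 -> p1 = p2.
Proof.
move=> h1 h2; apply/eqP; rewrite -subr_eq0 -normr_le0.
by have := metric_proj_nonexpansive h1 h2; rewrite subrr normr0.
Qed.

Lemma metric_proj_retraction {C D P} : (forall x, is_metric_proj ip D x (P x)) ->
  sunny_nonexpansive_retraction C D P.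
Proof.
move=> Pproj; split; [split|split].
- by move=> x _; case: (Pproj x).
- by move=> x Dx; apply/esym/(metric_proj_unique (metric_proj_id Dx)).
- move=> x t _ t0 _; apply/esym.
  exact: metric_proj_unique (metric_proj_sunny t0 (Pproj x)) (Pproj _).
- by move=> x y _ _; apply: metric_proj_nonexpansive.
Qed.

Lemma sunny_nonexpansive_retraction_metric_proj {C D Q y} :
  convex_set_in C -> D `<=` C -> sunny_nonexpansive_retraction C D Q -> C y ->
  is_metric_proj ip D y (Q y).
Proof.
move=> cvC DC [[QD Qid] [Qs Qne]] Cy; split; first exact: QD.
move=> p Dp; rewrite (ipC ipP); apply: (ip_le0_of_min_segment ipP) => t t0 t1.
have CQy : C (Q y) by apply/DC/QD.
have Cyt : C (Q y + t *: (y - Q y)).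
  by rewrite -convex_combE; apply: cvC => //; exact: ltW.
have := Qne _ _ Cyt (DC _ Dp).
rewrite (Qs _ _ Cy (ltW t0) Cyt) (Qid _ Dp) distrC (distrC _ p).
by rewrite opprD addrA.
Qed.

Lemma metric_proj_comp_contraction {C D P f} {alpha : R} :
  (forall x, is_metric_proj ip D x (P x)) -> D `<=` C ->
  contraction_on C f alpha -> contraction_on D (P \o f) alpha.
Proof.
move=> Pproj DC [a0 [a1 fc]]; split => //; split => // x y Dx Dy /=.
apply: le_trans (metric_proj_nonexpansive (Pproj _) (Pproj _)) _.
exact: fc (DC _ Dx) (DC _ Dy).
Qed.

End MetricProjection.

Lemma contraction_fixpoint {R : realType} {H : normedModType R}
    {K : set H} {g : H -> H} {alpha : R} :
  K !=set0 -> compact K -> maps_into K g -> contraction_on K g alpha ->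
  exists2 q, K q & g q = q.
Proof.
move=> K0 cK gK [a0 [a1 gc]].
pose residual y := `|y - g y|.
have residual_cont : {within K, continuous residual}.
  apply: (@lipschitz_within_continuous _ _ _ _ (1 + alpha)); first lra.
  move=> y1 y2 K1 K2; apply: le_trans (ler_dist_dist _ _) _.
  have -> : y1 - g y1 - (y2 - g y2) = (y1 - y2) - (g y1 - g y2).
    by rewrite opprB [in RHS]opprB addrACA [in RHS]addrACA [in RHS](addrC (- y2)).
  by rewrite (le_trans (ler_normB _ _)) // mulrDl mul1r lerD2l gc.
have [q /set_mem Kq qmin] := compact_EVT_min K0 cK residual_cont.
exists q => //; apply/eqP; rewrite eq_sym -subr_eq0 -normr_le0.
have := qmin _ (mem_set (gK _ Kq)); rewrite /residual.
have := gc _ _ Kq (gK _ Kq); have := normr_ge0 (q - g q); nra.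
Qed.

Section FixedPointSet.
Context {R : realType} {H : normedModType R}.
Context {C : set H} {T : H -> H}.
Hypothesis Tne : nonexpansive_on C T.

Lemma Fix_closed : closed C -> closed (Fix C T).
Proof.
move=> clC x clx.
have Cx : C x by apply: clC => B /clx [y [[Cy _] By]]; exists y.
split => //; apply/eqP; rewrite -subr_eq0 -normr_le0.
apply/ler_addgt0Pr => e e0; rewrite add0r.
have [p [[Cp Tp]]] := clx _ (nbhsx_ballx x _ (divr_gt0 e0 (ltr0n R 2))).
rewrite -ball_normE /= => xp.
rewrite (le_trans (ler_distD p _ _)) // -{1}Tp.
by rewrite (le_trans (lerD (Tne _ _ Cx Cp) (lexx _))) // distrC; lra.
Qed.

Lemma Fix_compact : compact C -> compact (Fix C T).
Proof.
move=> cC; apply: (subclosed_compact _ cC); last by move=> x [].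
by apply: Fix_closed; exact: (compact_closed (@norm_hausdorff _ _) cC).
Qed.

Lemma Fix_convex {ip : H -> H -> R} :
  is_inner_product ip -> convex_set_in C -> convex_set_in (Fix C T).
Proof.
move=> ipP cvC p1 p2 t [C1 T1] [C2 T2] t0 t1.
set m := t *: p1 + (1 - t) *: p2.
have Cm : C m by exact: cvC.
split => //; apply/eqP; rewrite -subr_eq0 -normr_le0.
have Tm_closer p : Fix C T p -> `|T m - p| ^+ 2 <= `|m - p| ^+ 2.
  by move=> [Cp Tp]; rewrite -{1}Tp lerXn2r ?nnegrE //; apply: Tne.
have e1 := Tm_closer _ (conj C1 T1); have e2 := Tm_closer _ (conj C2 T2).
have := sqr_norm_convex_comb ipP t p1 p2 (T m).
have := sqr_norm_convex_comb ipP t p1 p2 m; rewrite subrr normr0 expr0n /= -/m.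
have := normr_ge0 (T m - m); nra.
Qed.

Hypothesis TC : maps_into C T.

Lemma iter_maps_into k z : C z -> C (iter k T z).
Proof. by move=> Cz; elim: k => //= k IH; apply: TC. Qed.

Lemma iter_dist_Fix k z p : C z -> Fix C T p -> `|iter k T z - p| <= `|z - p|.
Proof.
move=> Cz [Cp Tp]; elim: k => //= k IH.
by rewrite -{1}Tp (le_trans (Tne _ _ (iter_maps_into k _ Cz) Cp)).
Qed.

End FixedPointSet.

Lemma compact_diam_bounded {R : realType} {V : normedModType R} {A : set V} :
  compact A -> exists2 D, 0 <= D & forall a b, A a -> A b -> `|a - b| <= D.
Proof.
move=> /compact_bounded /ex_strict_bound_gt0 [M M0 AM].
exists (2 * M) => [|a b Aa Bb]; first lra.
have := AM a Aa; have := AM b Bb; have := ler_normB a b; rewrite /=; lra.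
Qed.

Lemma cluster_Fix {R : realType} {H : normedModType R} {C : set H} {T : H -> H}
    {G : set_system H} {FG : Filter G} {w : H} :
  nonexpansive_on C T -> G C -> (forall e, 0 < e -> G [set y | `|y - T y| < e]) ->
  C w -> cluster G w -> Fix C T w.
Proof.
move=> Tne GC Gres Cw Gw; split => //; apply/eqP; rewrite -subr_eq0 -normr_le0.
apply/ler_addgt0Pr => e e0; rewrite add0r.
have e3 : 0 < e / 3 by rewrite divr_gt0.
have [y [[Cy /= ry]]] := Gw _ _ (filterI GC (Gres _ e3)) (nbhsx_ballx w _ e3).
rewrite -ball_normE /= => wy.
have := Tne _ _ Cw Cy; have := ler_distD (T y) (T w) w.
have := ler_distD y (T y) w; rewrite (distrC (T y) y) (distrC y w); lra.
Qed.

Lemma compact_cluster_eventually_lt {R : realType} {H : normedModType R}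
    {K : set H} {G : set_system H} {PG : ProperFilter G} {g : H -> R} :
  compact K -> G K -> continuous g ->
  (forall w, K w -> cluster G w -> g w <= 0) ->
  forall d, 0 < d -> G [set y | g y < d].
Proof.
move=> cK GK gc gK d d0; apply: contrapT => Gnot.
pose A := [set y | d <= g y].
have PA : ProperFilter (within A G).
  apply: Build_ProperFilter; rewrite /within /= => GA0; apply: Gnot.
  by apply: filterS GA0 => y /= Ay0; rewrite ltNge; apply/negP => /Ay0.
have [w [Kw Aw]] := cK _ PA (filterS (fun y Ky _ => Ky) GK).
have Gw : cluster G w by apply: cvg_cluster Aw; apply: cvg_within.
have gw_lt : \forall y \near w, g y < d.
  by apply: (gc w [set r | r < d]); apply: lt_nbhsl; have := gK _ Kw Gw; lra.
have [y [Ay gy]] := Aw _ _ (withinT A _) gw_lt.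
by move: Ay; rewrite /A /= leNgt gy.
Qed.

Section CesaroMeans.
Context {R : realType} {H : normedModType R} {C : set H} {T : H -> H}.
Hypothesis cvC : convex_set_in C.

Lemma convex_mean n (v : nat -> H) : (0 < n)%N ->
  (forall k, (1 <= k <= n)%N -> C (v k)) ->
  C (n%:R^-1 *: \sum_(1 <= k < n.+1) v k).
Proof.
elim: n => [//|[|n] IH] _ Cv.
  by rewrite big_nat1 invr1 scale1r; apply: Cv.
have n1 : (n.+1%:R : R) != 0 by rewrite pnatr_eq0.
have n2 : (n.+2%:R : R) != 0 by rewrite pnatr_eq0.
set t : R := n.+1%:R / n.+2%:R.
have -> : n.+2%:R^-1 *: \sum_(1 <= k < n.+3) v k =
    t *: (n.+1%:R^-1 *: \sum_(1 <= k < n.+2) v k) + (1 - t) *: v n.+2.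
  rewrite big_nat_recr //= scalerDr scalerA /t; congr (_ *: _ + _ *: _).
    by rewrite mulrAC divff // mul1r.
  by field; rewrite gt_eqF //; have := ler0n R n; lra.
apply: cvC.
- by apply: IH => // k /andP[k1 kn]; apply: Cv; rewrite k1 leqW.
- by apply: Cv; rewrite leqnn.
- by rewrite /t divr_ge0.
- by rewrite /t ler_pdivrMr ?ltr0n // mul1r ler_nat.
Qed.

Hypotheses (TC : maps_into C T) (Tne : nonexpansive_on C T).

Lemma cesaro_avg_in n z : (0 < n)%N -> C z -> C (cesaro_avg n T z).
Proof. by move=> n0 Cz; apply: convex_mean => // k _; exact: iter_maps_into. Qed.

Lemma cesaro_avg_dist_Fix n z p : (0 < n)%N -> C z -> Fix C T p ->
  `|cesaro_avg n T z - p| <= `|z - p|.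
Proof.
move=> n0 Cz Fp.
have -> : cesaro_avg n T z - p = n%:R^-1 *: \sum_(1 <= k < n.+1) (iter k T z - p).
  by rewrite sumrB sumr_const_nat subSS subn0 scalerBr scaler_natK.
rewrite normrZ ger0_norm ?invr_ge0 // ler_pdivrMl ?ltr0n // mulr_natl.
have -> : `|z - p| *+ n = \sum_(1 <= k < n.+1) `|z - p|.
  by rewrite sumr_const_nat subSS subn0.
rewrite (le_trans (ler_norm_sum _ _ _)) //.
by apply: ler_sum => k _; apply: (iter_dist_Fix Tne TC).
Qed.

Context {ip : H -> H -> R}.
Hypothesis ipP : is_inner_product ip.
Context {D : R}.
Hypothesis diamC : forall a b, C a -> C b -> `|a - b| <= D.

(* By Huygens' identity the sum of the |T S - T^k z|^2 (k = 1..n) exceeds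
   that of the |S - T^k z|^2 by n |T S - S|^2; by nonexpansiveness it exceeds
   it by at most |T S - T z|^2 <= D^2. *)
Lemma cesaro_avg_residual n z : (0 < n)%N -> C z ->
  n%:R * `|T (cesaro_avg n T z) - cesaro_avg n T z| ^+ 2 <= D ^+ 2.
Proof.
move=> n0 Cz; set S := cesaro_avg n T z.
have CS : C S by exact: cesaro_avg_in.
have Cit k : C (iter k T z) by exact: iter_maps_into.
have huygens : \sum_(1 <= k < n.+1) `|T S - iter k T z| ^+ 2 =
    n%:R * `|T S - S| ^+ 2 + \sum_(1 <= k < n.+1) `|S - iter k T z| ^+ 2.
  exact: (sum_sqr_dist_mean ipP).
have shift : \sum_(1 <= k < n.+1) `|T S - iter k.+1 T z| ^+ 2 <=
    \sum_(1 <= k < n.+1) `|S - iter k T z| ^+ 2.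
  by apply: ler_sum => k _; rewrite lerXn2r ?nnegrE //; apply: Tne _ _ CS (Cit k).
have first_term : `|T S - iter 1 T z| ^+ 2 <= D ^+ 2.
  have D0 : 0 <= D by have := diamC _ _ CS CS; rewrite subrr normr0.
  by rewrite lerXn2r ?nnegrE //; apply: diamC; [apply: TC | apply: Cit].
have split_first : \sum_(1 <= k < n.+2) `|T S - iter k T z| ^+ 2 =
    `|T S - iter 1 T z| ^+ 2 + \sum_(1 <= k < n.+1) `|T S - iter k.+1 T z| ^+ 2.
  by rewrite big_nat_recl.
have split_last : \sum_(1 <= k < n.+2) `|T S - iter k T z| ^+ 2 =
    \sum_(1 <= k < n.+1) `|T S - iter k T z| ^+ 2 + `|T S - iter n.+1 T z| ^+ 2.
  by rewrite big_nat_recr.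
have := sqr_ge0 `|T S - iter n.+1 T z|; lra.
Qed.

Lemma cesaro_avg_residual_small e : 0 < e ->
  \forall n \near \oo, forall z, C z ->
    `|cesaro_avg n T z - T (cesaro_avg n T z)| < e.
Proof.
move=> e0; near=> n => z Cz.
have n0 : (0 < n)%N by near: n; exact: nbhs_infty_gt.
have n_big : D ^+ 2 / e ^+ 2 < n%:R.
  by near: n; apply: filterS (nbhs_infty_ger (D ^+ 2 / e ^+ 2 + 1)) => m /=; lra.
have := cesaro_avg_residual _ _ n0 Cz; rewrite distrC.
rewrite -(ltr_pXn2r (_ : (0 < 2)%N)) ?nnegrE ?(ltW e0) //.
rewrite ltr_pdivrMr ?exprn_gt0 // in n_big.
have : (0 : R) < n%:R by rewrite ltr0n.
nra.
Unshelve. all: by end_near.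
Qed.

End CesaroMeans.

Section ViscosityIteration.
Context {R : realType} {H : normedModType R} {ip : H -> H -> R}.
Hypothesis ipP : is_inner_product ip.
Context {C : set H} {T f : H -> H} {alpha : R} {eps : nat -> R} {u : nat -> H}.
Hypotheses (cC : compact C) (cvC : convex_set_in C) (TC : maps_into C T)
  (Tne : nonexpansive_on C T) (fC : maps_into C f) (fc : contraction_on C f alpha).
Hypotheses (eps01 : forall n, 0 < eps n /\ eps n < 1) (eps0 : eps @ \oo --> 0).
Hypothesis uE : forall n, (0 < n)%N ->
  C (u n) /\ u n = eps n *: f (u n) + (1 - eps n) *: cesaro_avg n T (u n).

Lemma viscosity_dist_le n p : (0 < n)%N -> Fix C T p ->
  `|u n - p| ^+ 2 <= ip (f (u n) - p) (u n - p).
Proof.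
move=> n0 Fp; have [Cu uEn] := uE n n0; have [e0 e1] := eps01 n.
set S := cesaro_avg n T (u n).
have Sp : `|S - p| <= `|u n - p| by apply: (cesaro_avg_dist_Fix TC Tne).
have expand : `|u n - p| ^+ 2 = eps n * ip (f (u n) - p) (u n - p)
    + (1 - eps n) * ip (S - p) (u n - p).
  by rewrite -(ip_norm2 ipP) {1}uEn !(ipE ipP); ring.
have S_term : ip (S - p) (u n - p) <= `|u n - p| ^+ 2.
  rewrite (le_trans (cauchy_schwarz ipP _ _)) // expr2.
  by apply: ler_wpM2r.
rewrite -(ler_pM2l e0); nra.
Qed.

Lemma viscosity_anchor_bound n q : (0 < n)%N -> Fix C T q ->
  (1 - alpha) * `|u n - q| ^+ 2 <= ip (f q - q) (u n - q).
Proof.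
move=> n0 Fq; have [Cu _] := uE n n0; have [_ [_ fL]] := fc.
have := viscosity_dist_le n q n0 Fq.
have fuq : ip (f (u n) - f q) (u n - q) <= alpha * `|u n - q| ^+ 2.
  rewrite (le_trans (cauchy_schwarz ipP _ _)) // expr2 mulrA.
  by apply: ler_wpM2r => //; apply: fL => //; case: Fq.
move: fuq; rewrite !(ipE ipP); lra.
Qed.

Lemma viscosity_residual_small e : 0 < e ->
  \forall n \near \oo, `|u n - T (u n)| < e.
Proof.
move=> e0; have [D D0 diamC] := compact_diam_bounded cC.
have k0 : 0 < e / (4 * (D + 1)) by rewrite divr_gt0 //; lra.
near=> n.
have n0 : (0 < n)%N by near: n; exact: nbhs_infty_gt.
have eps_small : eps n < e / (4 * (D + 1)).
  near: n; apply: filterS (cvgr0_norm_lt eps eps0 _ k0) => m.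
  by rewrite gtr0_norm //; case: (eps01 m).
have S_res : forall z, C z -> `|cesaro_avg n T z - T (cesaro_avg n T z)| < e / 2.
  by near: n; apply: (cesaro_avg_residual_small cvC TC Tne ipP diamC); lra.
have [Cu uEn] := uE n n0; have [ep0 _] := eps01 n.
set S := cesaro_avg n T (u n).
have CS : C S by apply: (cesaro_avg_in cvC TC).
have uS : `|u n - S| = eps n * `|f (u n) - S|.
  by rewrite {1}uEn convex_combE addrAC subrr add0r normrZ gtr0_norm.
have fS : eps n * `|f (u n) - S| <= e / 4.
  apply: le_trans (ler_wpM2l (ltW ep0) (diamC _ _ (fC _ Cu) CS)) _.
  apply: le_trans (ler_wpM2r D0 (ltW eps_small)) _.
  by rewrite mulrAC ler_pdivrMr; nra.
have := S_res _ Cu; rewrite -/S => SS.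
(* |u - T u| <= |u - S| + |S - T S| + |T S - T u| <= 2 |u - S| + |S - T S| *)
have := Tne _ _ CS Cu; have := ler_distD (T S) S (T (u n)).
have := ler_distD S (u n) (T (u n)); rewrite (distrC S (u n)); lra.
Unshelve. all: by end_near.
Qed.

Lemma viscosity_cvg q : is_metric_proj ip (Fix C T) (f q) q -> u @ \oo --> q.
Proof.
move=> [Fq qVI]; have [a0 [a1 _]] := fc.
pose g y := ip (f q - q) (y - q).
have gc : continuous g.
  apply/continuous_subspace_setT.
  apply: (@lipschitz_within_continuous _ _ _ _ `|f q - q|) => // x y _ _.
  by rewrite /g -(ipBr ipP) opprB addrA subrK norm_ip_le.
have uC : \forall n \near \oo, C (u n).
  by apply: filterS (nbhs_infty_gt 0) => n /(uE n) [].
have g_cluster w : C w -> cluster (u @ \oo) w -> g w <= 0.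
  move=> Cw uw; apply: qVI.
  exact: cluster_Fix Tne uC viscosity_residual_small Cw uw.
apply/cvgrPdist_lt => e e0.
have d0 : 0 < (1 - alpha) * e ^+ 2 by rewrite mulr_gt0 ?exprn_gt0 //; lra.
near=> n.
have n0 : (0 < n)%N by near: n; exact: nbhs_infty_gt.
have gn : g (u n) < (1 - alpha) * e ^+ 2.
  by near: n; exact: (compact_cluster_eventually_lt cC uC gc g_cluster).
have := viscosity_anchor_bound n q n0 Fq; rewrite -/(g (u n)) => bound.
have : `|u n - q| ^+ 2 < e ^+ 2 by rewrite -(ltr_pM2l (_ : 0 < 1 - alpha)); lra.
by rewrite distrC ltr_pXn2r ?nnegrE ?(ltW e0).
Unshelve. all: by end_near.
Qed.

End ViscosityIteration.

Lemma cvg_ptws {R : realType} {H : normedModType R} (I : Type)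
    (z : nat -> I -> H) (x : I -> H) :
  (forall i, (fun n => z n i) @ \oo --> x i) ->
  (fun n => (z n : {ptws I -> H})) @ \oo --> (x : {ptws I -> H}).
Proof.
move=> zx.
apply/(@cvg_sup _ _
  (fun i => Topological.class (initial_topology (fun g : I -> H => g i)))) => i.
have surj_eval : range (fun g : I -> H => g i) = setT.
  by apply/seteqP; split => // y _; exists (fun _ => y).
apply/cvg_image => // B /= Bx.
exists ((fun g : I -> H => g i) @^-1` B); first exact: zx i B Bx.
by rewrite image_preimage.
Qed.

Theorem corollary4p1 (R : realType) (H : completeNormedModType R)
  (ip : H -> H -> R) (I : Type) (C : I -> set H) (T f : I -> H -> H)
  (alpha : I -> R) (eps : nat -> R) :
  is_inner_product ip ->
  (exists i0 : I, True) ->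
  (forall i, C i !=set0) ->
  (forall i, compact (C i)) ->
  (forall i, convex_set_in (C i)) ->
  (forall i, maps_into (C i) (T i)) ->
  (forall i, nonexpansive_on (C i) (T i)) ->
  (forall i, Fix (C i) (T i) !=set0) ->
  (forall i, maps_into (C i) (f i)) ->
  (forall i, contraction_on (C i) (f i) (alpha i)) ->
  (forall n, 0 < eps n /\ eps n < 1) ->
  eps @ \oo --> 0 ->
  exists P : I -> H -> H, exists x : I -> H,
    (forall i,
       sunny_nonexpansive_retraction (C i) (Fix (C i) (T i)) (P i) /\
       (forall Q : H -> H,
          sunny_nonexpansive_retraction (C i) (Fix (C i) (T i)) Q ->
          forall y, C i y -> Q y = P i y) /\
       C i (x i)) /\
    forall z : nat -> I -> H,
      (forall (n : nat) (i : I), (0 < n)%N ->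
         C i (z n i) /\
         z n i = eps n *: f i (z n i)
                 + (1 - eps n) *: cesaro_avg n (T i) (z n i)) ->
      (fun n => (z n : {ptws I -> H})) @ \oo
        --> ((fun i => P i (x i)) : {ptws I -> H}).
Proof.
move=> ipP _ _ cC cvC TC Tne F0 fC fc eps01 eps0.
have FC i : Fix (C i) (T i) `<=` C i by move=> ? [].
have /choice[P Pproj] i :
    exists Pi : H -> H, forall x, is_metric_proj ip (Fix (C i) (T i)) x (Pi x).
  exact: metric_proj_exists ipP _ (F0 i) (Fix_compact (Tne i) (cC i))
    (Fix_convex (Tne i) ipP (cvC i)).
have /choice[q qP] i : exists qi, Fix (C i) (T i) qi /\ P i (f i qi) = qi.
  have [|y Fy Pfy] := contraction_fixpoint (F0 i) (Fix_compact (Tne i) (cC i)) _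
    (metric_proj_comp_contraction ipP (Pproj i) (FC i) (fc i)); last by exists y.
  by move=> x _; case: (Pproj i (f i x)).
exists P, (fun i => f i (q i)); split => [i|z zE].
  split; first exact: (metric_proj_retraction (C := C i) ipP (Pproj i)).
  split; last by apply: fC; apply: FC; case: (qP i).
  move=> Q QP y Cy; apply: (metric_proj_unique ipP _ (Pproj i y)).
  exact: (sunny_nonexpansive_retraction_metric_proj ipP (cvC i) (FC i) QP Cy).
apply: cvg_ptws => i; have [_ Pfq] := qP i; rewrite Pfq.
apply: (viscosity_cvg ipP (cC i) (cvC i) (TC i) (Tne i) (fC i) (fc i) eps01 eps0
  (fun n n0 => zE n i n0)).
by rewrite -[X in is_metric_proj _ _ _ X]Pfq.
Qed.
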